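(* Let $K\subset\mathbb{R}^m$ be a pointed, closed, convex cone with nonempty interior, let $C\subset\mathbb{R}^m$ be a compact set with $0\notin C$ and $K^*=\operatorname{cone}(\operatorname{conv}(C))$, and let $F:\mathbb{R}^n\to\mathbb{R}^m$ be continuously differentiable with Jacobian $JF$. Define $h(x,d)=\sup\{\langle JF(x)d,w\rangle : w\in C\}$ and $v(x)=\arg\min_{d\in\mathbb{R}^n}\{h(x,d)+\tfrac12\|d\|^2\}$. Fix $\mu>2$. Let $\{x^k\}$ and $\{d^k\}$ be generated by the following scheme with arbitrary positive stepsizes $\alpha_k$: $x^0\in\mathbb{R}^n$ arbitrary; at iteration $k$, if $v(x^k)=0$ stop; otherwise set $d^0=v(x^0)$ and, for $k\ge1$, $d^k=v(x^k)+\beta_k d^{k-1}$, where $$\beta_k=\frac{-h(x^k,v(x^k))\big(|h(x^{k-1},v(x^k))|+h(x^{k-1},v(x^k))\big)}{\max\big\{\mu\,|h(x^k,d^{k-1})\,h(x^{k-1},v(x^k))|,\ -\mu\, h(x^{k-1},v(x^{k-1}))\,|h(x^{k-1},v(x^k))|\big\}},$$ and then $x^{k+1}=x^k+\alpha_k d^k$. Then for every $k\ge0$, $$h(x^k,d^k)\le\Big(1-\frac{2}{\mu}\Big)h(x^k,v(x^k)),$$ i.e. $d^k$ satisfies the sufficient descent condition $h(x^k,d^k)\le c\,h(x^k,v(x^k))$ with $c=1-\frac{2}{\mu}$.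
   Context: $K^*=\{w\in\mathbb{R}^m:\langle y,w\rangle\ge0\ \forall y\in K\}$ is the positive polar cone of $K$. The map $h$ is well defined since $C$ is compact, and $v(x)$ is the unique minimizer of the strongly convex function $d\mapsto h(x,d)+\frac12\|d\|^2$. A vector $d$ is a $K$-descent direction at $x$ iff $h(x,d)<0$, and $v(x)=0$ iff $x$ is a $K$-Pareto critical point, i.e. $\operatorname{Im}(JF(x))\cap(-\operatorname{int}K)=\emptyset$. *)

From HB Require Import structures.
From mathcomp Require Import all_boot all_order all_algebra.
From mathcomp Require Import all_classical all_reals all_analysis.
Set Implicit Arguments. Unset Strict Implicit. Unset Printing Implicit Defensive.
Import Order.TTheory GRing.Theory Num.Theory.
Import numFieldNormedType.Exports.
Local Open Scope classical_set_scope.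
Local Open Scope ring_scope.

Section Defs.
Variable R : realType.

Definition dotp k (u w : 'rV[R]_k) : R := \sum_(i < k) u 0 i * w 0 i.
Definition sqnorm k (d : 'rV[R]_k) : R := dotp d d.

Definition conv_hull k (S : set 'rV[R]_k) : set 'rV[R]_k :=
  [set y | exists (p : nat) (lam : 'I_p -> R) (z : 'I_p -> 'rV[R]_k),
     (forall i, 0 <= lam i) /\ \sum_(i < p) lam i = 1 /\
     (forall i, S (z i)) /\ y = \sum_(i < p) lam i *: z i].

Definition cone_hull k (S : set 'rV[R]_k) : set 'rV[R]_k :=
  [set y | exists (p : nat) (t : 'I_p -> R) (z : 'I_p -> 'rV[R]_k),
     (forall i, 0 <= t i) /\ (forall i, S (z i)) /\ y = \sum_(i < p) t i *: z i].

Definition polar_cone k (K : set 'rV[R]_k) : set 'rV[R]_k :=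
  [set w | forall y, K y -> 0 <= dotp y w].

Definition is_cone k (K : set 'rV[R]_k) : Prop :=
  forall (t : R) y, 0 <= t -> K y -> K (t *: y).
Definition is_convex_set k (K : set 'rV[R]_k) : Prop :=
  forall (a : R) y z, 0 <= a <= 1 -> K y -> K z -> K (a *: y + (1 - a) *: z).
Definition is_pointed k (K : set 'rV[R]_k) : Prop :=
  forall y, K y -> K (- y) -> y = 0.

Definition C1 n m (F : 'rV[R]_n -> 'rV[R]_m) : Prop :=
  (forall x, differentiable F x) /\ continuous (jacobian F).

(* JF(x) d : the Jacobian of F at x applied to d (= differential of F at x) *)
Definition JF n m (F : 'rV[R]_n -> 'rV[R]_m) (x d : 'rV[R]_n) : 'rV[R]_m :=
  'd F x d.

Definition hfun n m (F : 'rV[R]_n -> 'rV[R]_m) (C : set 'rV[R]_m)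
  (x d : 'rV[R]_n) : R := sup [set dotp (JF F x d) w | w in C].

Definition vobj n m (F : 'rV[R]_n -> 'rV[R]_m) (C : set 'rV[R]_m)
  (x d : 'rV[R]_n) : R := hfun F C x d + sqnorm d / 2.

Definition beta_coef n m (F : 'rV[R]_n -> 'rV[R]_m) (C : set 'rV[R]_m)
  (mu : R) (xprev xk vprev vk dprev : 'rV[R]_n) : R :=
  (- hfun F C xk vk * (`|hfun F C xprev vk| + hfun F C xprev vk)) /
  Num.max (mu * `|hfun F C xk dprev * hfun F C xprev vk|)
          (- mu * hfun F C xprev vprev * `|hfun F C xprev vk|).

End Defs.

(* The map d |-> h(x,d) is a supremum of linear functionals, hence sublinear,
   and h(x, v(x)) <= 0 because v(x) does at least as well as d = 0 in the
   problem defining it.  Since beta_k >= 0, sublinearity gives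
   h(x^k, d^k) <= h(x^k, v(x^k)) + beta_k h(x^k, d^(k-1)), and the first
   argument of the max in the denominator of beta_k is designed so that
   beta_k h(x^k, d^(k-1)) <= -(2/mu) h(x^k, v(x^k)).  No induction along the
   iteration is needed: each step is controlled on its own. *)
From HB Require Import structures.
From mathcomp Require Import all_boot all_order all_algebra.
From mathcomp Require Import all_classical all_reals all_analysis.
From mathcomp Require Import ring.
Set Implicit Arguments. Unset Strict Implicit. Unset Printing Implicit Defensive.
Import Order.TTheory GRing.Theory Num.Theory.
Import numFieldNormedType.Exports.
Local Open Scope classical_set_scope.
Local Open Scope ring_scope.

Section SufficientDescent.
Variable R : realType.

Lemma dotpDZl k (y1 y2 w : 'rV[R]_k) (t : R) :
  dotp (y1 + t *: y2) w = dotp y1 w + t * dotp y2 w.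
Proof.
rewrite /dotp mulr_sumr -big_split /=; apply: eq_bigr => i _.
by rewrite !mxE mulrDl mulrA.
Qed.

Lemma dotp0l k (w : 'rV[R]_k) : dotp 0 w = 0.
Proof. by rewrite /dotp big1 // => i _; rewrite mxE mul0r. Qed.

Lemma sqnorm_ge0 k (d : 'rV[R]_k) : 0 <= sqnorm d.
Proof. by rewrite /sqnorm /dotp sumr_ge0 // => i _; rewrite -expr2 sqr_ge0. Qed.

Lemma sqnorm0 k : sqnorm (0 : 'rV[R]_k) = 0.
Proof. exact: dotp0l. Qed.

Lemma has_ubound_dotp k (C : set 'rV[R]_k) y :
  compact C -> has_ubound [set dotp y w | w in C].
Proof.
move=> /compact_bounded[M0 [_ leM0]].
have normC w : C w -> `|w| <= M0 + 1 by apply: leM0; rewrite ltrDl.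
exists (\sum_(i < k) `|y 0 i| * (M0 + 1)) => _ [w Cw <-].
rewrite /dotp; apply: ler_sum => i _.
apply: le_trans (ler_norm _) _; rewrite normrM ler_wpM2l //.
apply: le_trans (normC w Cw); rewrite [`|w|]mx_normrE.
exact: (le_bigmax _ (fun ij : 'I_1 * 'I_k => `|w ij.1 ij.2|) (0, i)).
Qed.

Section Hfun.
Variables (n m : nat) (F : 'rV[R]_n -> 'rV[R]_m) (C : set 'rV[R]_m).

Lemma hfun0 x : hfun F C x 0 = 0.
Proof.
rewrite /hfun /JF linear0.
have [[w0 Cw0]|noC] := pselect (exists w, C w); last first.
  have -> : C = set0 by apply/seteqP; split => w // Cw; apply: noC; exists w.
  by rewrite image_set0 sup0.
suff -> : [set dotp 0 w | w in C] = [set 0] by exact: sup1.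
apply/seteqP; split => [_ [w _ <-]|_ ->]; first by rewrite dotp0l.
by exists w0; rewrite ?dotp0l.
Qed.

Lemma hfunDZ_le x (a b : 'rV[R]_n) (t : R) : compact C -> 0 <= t ->
  hfun F C x (a + t *: b) <= hfun F C x a + t * hfun F C x b.
Proof.
move=> cC t0; rewrite /hfun.
have [[w0 Cw0]|noC] := pselect (exists w, C w); last first.
  have -> : C = set0 by apply/seteqP; split => w // Cw; apply: noC; exists w.
  by rewrite !image_set0 sup0 mulr0 addr0.
apply: ge_sup; first by exists (dotp (JF F x (a + t *: b)) w0), w0.
move=> _ [w Cw <-]; rewrite /JF linearD linearZ /= dotpDZl.
have le_hfun y : dotp y w <= sup [set dotp y w' | w' in C].
  by apply: ub_le_sup; [exact: has_ubound_dotp | exists w].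
by rewrite lerD ?ler_wpM2l.
Qed.

Lemma hfun_le0 x u : vobj F C x u <= vobj F C x 0 -> hfun F C x u <= 0.
Proof.
rewrite /vobj hfun0 sqnorm0 mul0r addr0; apply: le_trans.
by rewrite lerDl divr_ge0 ?sqnorm_ge0.
Qed.

End Hfun.

Definition beta_ratio (mu a b c e : R) : R :=
  (- a * (`|b| + b)) / Num.max (mu * `|c * b|) (- mu * e * `|b|).

Lemma beta_coefE n m (F : 'rV[R]_n -> 'rV[R]_m) C mu xp xk vp vk dp :
  beta_coef F C mu xp xk vp vk dp =
  beta_ratio mu (hfun F C xk vk) (hfun F C xp vk) (hfun F C xk dp)
    (hfun F C xp vp).
Proof. by []. Qed.

Section BetaRatio.
Variables (mu a b c e : R).
Hypotheses (mu_gt0 : 0 < mu) (a_le0 : a <= 0).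

Let max_ge : mu * `|c * b| <= Num.max (mu * `|c * b|) (- mu * e * `|b|).
Proof. by rewrite le_max lexx. Qed.

Lemma descent_gap_ge0 : 0 <= 2 / mu * - a.
Proof. by rewrite mulr_ge0 ?oppr_ge0 // divr_ge0 // ltW. Qed.

Lemma beta_ratio_ge0 : 0 <= beta_ratio mu a b c e.
Proof.
have normD_ge0 : 0 <= `|b| + b by rewrite -lerBlDl sub0r (lerNnormlW (lexx _)).
rewrite divr_ge0 ?mulr_ge0 ?oppr_ge0 //.
by apply: le_trans max_ge; rewrite mulr_ge0 ?normr_ge0 ?ltW.
Qed.

Lemma beta_ratio_mulr_le : beta_ratio mu a b c e * c <= 2 / mu * - a.
Proof.
have [b_le0|b_gt0] := lerP b 0.
  by rewrite /beta_ratio ler0_norm // addNr mulr0 !mul0r descent_gap_ge0.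
have [c_le0|c_gt0] := lerP c 0.
  exact: le_trans (mulr_ge0_le0 beta_ratio_ge0 c_le0) descent_gap_ge0.
move: max_ge.
rewrite /beta_ratio (gtr0_norm (mulr_gt0 c_gt0 b_gt0)) (gtr0_norm b_gt0).
set D := Num.max _ _ => le_D.
have D_gt0 : 0 < D by apply: lt_le_trans le_D; rewrite !mulr_gt0.
rewrite mulrAC ler_pdivrMr //; apply: le_trans (ler_wpM2l descent_gap_ge0 le_D).
suff -> : 2 / mu * - a * (mu * (c * b)) = - a * (b + b) * c by [].
by field; rewrite gt_eqF.
Qed.

End BetaRatio.

Lemma sufficient_descent_le (mu a t : R) :
  t <= 2 / mu * - a -> a + t <= (1 - 2 / mu) * a.
Proof.
have -> : (1 - 2 / mu) * a = a + 2 / mu * - a by ring.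
by rewrite lerD2l.
Qed.

End SufficientDescent.

Theorem mainTheorem1 (R : realType) (n m : nat)
  (K C : set 'rV[R]_m) (F : 'rV[R]_n -> 'rV[R]_m)
  (v : 'rV[R]_n -> 'rV[R]_n) (mu : R)
  (alpha : nat -> R) (x d : nat -> 'rV[R]_n) :
  is_pointed K -> closed K -> is_convex_set K -> is_cone K ->
  interior K !=set0 ->
  compact C -> ~ C 0 ->
  polar_cone K = cone_hull (conv_hull C) ->
  C1 F ->
  (* v(x) is the minimizer of d |-> h(x,d) + ||d||^2/2 (unique) *)
  (forall y e, vobj F C y (v y) <= vobj F C y e) ->
  2 < mu ->
  (forall k, 0 < alpha k) ->
  (* the scheme, run as long as it has not stopped (v(x^j) <> 0 for j <= k) *)
  d 0%N = v (x 0%N) ->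
  (forall k, (forall j, (j <= k)%N -> v (x j) != 0) ->
     x k.+1 = x k + alpha k *: d k) ->
  (forall k, (forall j, (j <= k.+1)%N -> v (x j) != 0) ->
     d k.+1 = v (x k.+1) +
       beta_coef F C mu (x k) (x k.+1) (v (x k)) (v (x k.+1)) (d k) *: d k) ->
  forall k, (forall j, (j <= k)%N -> v (x j) != 0) ->
    hfun F C (x k) (d k) <= (1 - 2 / mu) * hfun F C (x k) (v (x k)).
Proof.
move=> _ _ _ _ _ cC _ _ _ v_min mu_gt2 _ d0 _ dS k running.
have mu_gt0 : 0 < mu by apply: lt_trans mu_gt2.
have hv_le0 y : hfun F C y (v y) <= 0 by apply/hfun_le0/v_min.
case: k running => [|k] running.
  rewrite d0 -[X in X <= _]addr0; apply: sufficient_descent_le.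
  exact: descent_gap_ge0.
rewrite dS // beta_coefE; set beta := beta_ratio _ _ _ _ _.
have beta_ge0 : 0 <= beta by exact: beta_ratio_ge0.
apply: le_trans (hfunDZ_le F (x k.+1) (v (x k.+1)) (d k) cC beta_ge0) _.
exact/sufficient_descent_le/beta_ratio_mulr_le.
Qed.
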